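(* Let $E=\{x:\langle Ax,x\rangle=1\}$, $A=\operatorname{diag}(1/a_1^2,1/a_2^2)$, and let $P=(p_1,\dots,p_n)$ be an $n$-periodic billiard trajectory in $E$ with angles $\alpha_1,\dots,\alpha_n$, perimeter $L$, and $J=-\langle u_1,Ap_1\rangle$ where $u_1=(p_2-p_1)/|p_2-p_1|$. Then \[\sum_{i=1}^n\cos\alpha_i=JL-n.\]
   Context: An $n$-periodic billiard trajectory in $E$ is a closed polygon $(p_1,\dots,p_n)$ (indices mod $n$) with all $p_i\in E$ obeying the law of reflection at every vertex. The angle $\alpha_i$ is the angle at $p_i$ between the segments $p_ip_{i-1}$ and $p_ip_{i+1}$. *)

From Stdlib Require Import Reals.
Open Scope R_scope.

Definition pt := (R * R)%type.
Definition dot (u v : pt) : R := fst u * fst v + snd u * snd v.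
Definition vsub (u v : pt) : pt := (fst u - fst v, snd u - snd v).
Definition vscale (c : R) (u : pt) : pt := (c * fst u, c * snd u).
Definition norm (u : pt) : R := sqrt (dot u u).

Definition Amul (a1 a2 : R) (x : pt) : pt := (fst x / a1 ^ 2, snd x / a2 ^ 2).

Definition on_ellipse (a1 a2 : R) (x : pt) : Prop := dot (Amul a1 a2 x) x = 1.

Definition unit_dir (p q : pt) : pt := vscale (/ norm (vsub q p)) (vsub q p).

(* law of reflection at q (incoming from p, outgoing to r): the outgoing unit
   direction is the mirror image of the incoming one w.r.t. the tangent line,
   i.e. u_out = u_in - 2 <u_in, nu> nu with nu = A q / |A q| the unit normal. *)
Definition reflection_law (a1 a2 : R) (p q r : pt) : Prop :=
  let nu := vscale (/ norm (Amul a1 a2 q)) (Amul a1 a2 q) in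
  let uin := unit_dir p q in
  unit_dir q r = vsub uin (vscale (2 * dot uin nu) nu).

(* n-periodic billiard trajectory in E, indexed by nat with p (i+n) = p i;
   vertices p_1..p_n are p 1 .. p n. *)
Definition periodic_billiard (a1 a2 : R) (n : nat) (p : nat -> pt) : Prop :=
  (2 <= n)%nat /\
  (forall i, p (i + n)%nat = p i) /\
  (forall i, on_ellipse a1 a2 (p i)) /\
  (forall i, p (S i) <> p i) /\
  (forall i, (1 <= i)%nat -> reflection_law a1 a2 (p (i - 1)%nat) (p i) (p (S i))).

Definition cos_angle (p : nat -> pt) (i : nat) : R :=
  let v := vsub (p (i - 1)%nat) (p i) in
  let w := vsub (p (S i)) (p i) in
  dot v w / (norm v * norm w).

Definition perimeter (p : nat -> pt) (n : nat) : R :=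
  sum_f_R0 (fun k => norm (vsub (p (S (S k))) (p (S k)))) (n - 1).

(** The Joachimsthal integral [J = -<u_i, A p_i>] is the same at every
    vertex: along a chord [p q] of the ellipse [<u, A q> = -<u, A p>], and the
    reflection at [q] reverses the normal component of [u].  Writing
    [nu = A q / |A q|] and using [<A q, q> = 1], the reflection law gives
    [1 - <u_i, u_(i+1)> = J (<u_i, p_(i+1)> - <u_(i+1), p_(i+1)>)], and
    [<u_i, p_(i+1)> = <u_i, p_i> + |p_(i+1) - p_i|].  Since
    [cos alpha_(i+1) = -<u_i, u_(i+1)>], summing over one period telescopes
    the terms [<u_i, p_i>] and leaves [J L - n]. *)

From Stdlib Require Import Reals Lra Lia.
Open Scope R_scope.

Lemma dot_comm u v : dot u v = dot v u.
Proof. destruct u, v; unfold dot; simpl; ring. Qed.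

Lemma dot_scale_l c u v : dot (vscale c u) v = c * dot u v.
Proof. destruct u, v; unfold dot, vscale; simpl; ring. Qed.

Lemma dot_scale_r c u v : dot u (vscale c v) = c * dot u v.
Proof. destruct u, v; unfold dot, vscale; simpl; ring. Qed.

Lemma dot_sub_l u v w : dot (vsub u v) w = dot u w - dot v w.
Proof. destruct u, v, w; unfold dot, vsub; simpl; ring. Qed.

Lemma dot_sub_r u v w : dot w (vsub u v) = dot w u - dot w v.
Proof. destruct u, v, w; unfold dot, vsub; simpl; ring. Qed.

Lemma dot_vsub_swap_l p q w : dot (vsub p q) w = - dot (vsub q p) w.
Proof. rewrite !dot_sub_l; ring. Qed.

Lemma dot_self_ge0 u : 0 <= dot u u.
Proof. destruct u; unfold dot; simpl; nra. Qed.

Lemma dot_self_gt0 u : u <> (0, 0) -> 0 < dot u u.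
Proof.
  destruct u as [x y]; unfold dot; simpl; intro Hu.
  destruct (Req_dec x 0), (Req_dec y 0); subst; [now exfalso | nra ..].
Qed.

Lemma norm_mul_self u : norm u * norm u = dot u u.
Proof. apply sqrt_sqrt, dot_self_ge0. Qed.

Lemma norm_gt0 u : u <> (0, 0) -> 0 < norm u.
Proof. intro Hu; apply sqrt_lt_R0, dot_self_gt0, Hu. Qed.

Lemma norm_vsub_swap p q : norm (vsub p q) = norm (vsub q p).
Proof. unfold norm; f_equal; destruct p, q; unfold dot, vsub; simpl; ring. Qed.

Lemma vsub_neq0 p q : q <> p -> vsub q p <> (0, 0).
Proof.
  destruct p as [a b], q as [c d]; unfold vsub; simpl; intros Hqp E.
  injection E; intros; apply Hqp; f_equal; lra.
Qed.

Lemma unit_dir_dot_self p q : q <> p -> dot (unit_dir p q) (unit_dir p q) = 1.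
Proof.
  intro Hqp; pose proof (norm_gt0 _ (vsub_neq0 _ _ Hqp)).
  unfold unit_dir; rewrite dot_scale_l, dot_scale_r, <- norm_mul_self.
  field; lra.
Qed.

Lemma unit_dir_dot_vsub p q : dot (unit_dir p q) (vsub q p) = norm (vsub q p).
Proof.
  unfold unit_dir; rewrite dot_scale_l, <- norm_mul_self.
  destruct (Req_dec (norm (vsub q p)) 0) as [E | E]; [rewrite E; ring | field; auto].
Qed.

(* The statement holds with no hypothesis since [/ 0 = 0] on both sides. *)
Lemma cos_angle_unit_dir p q r :
  dot (vsub p q) (vsub r q) / (norm (vsub p q) * norm (vsub r q))
  = - dot (unit_dir p q) (unit_dir q r).
Proof.
  unfold unit_dir, Rdiv.
  rewrite dot_vsub_swap_l, norm_vsub_swap, dot_scale_l, dot_scale_r, Rinv_mult.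
  ring.
Qed.

Lemma Amul_dot_sym a1 a2 u v : dot u (Amul a1 a2 v) = dot (Amul a1 a2 u) v.
Proof. destruct u, v; unfold dot, Amul; simpl; unfold Rdiv; ring. Qed.

Lemma Amul_on_ellipse_neq0 a1 a2 x : on_ellipse a1 a2 x -> Amul a1 a2 x <> (0, 0).
Proof. unfold on_ellipse; intros Hx E; rewrite E in Hx; unfold dot in Hx; simpl in Hx; lra. Qed.

Definition mirror (w u : pt) : pt :=
  let nu := vscale (/ norm w) w in vsub u (vscale (2 * dot u nu) nu).

Lemma mirror_dot_normal w u : w <> (0, 0) -> dot (mirror w u) w = - dot u w.
Proof.
  intro Hw; pose proof (norm_gt0 _ Hw).
  unfold mirror; rewrite dot_sub_l, !dot_scale_l, dot_scale_r, <- norm_mul_self.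
  field; lra.
Qed.

Lemma mirror_defect w u x : w <> (0, 0) -> dot w x = 1 -> dot u u = 1 ->
  1 - dot u (mirror w u) = dot u w * dot (vsub u (mirror w u)) x.
Proof.
  intros Hw Hwx Hu; pose proof (norm_gt0 _ Hw).
  unfold mirror; rewrite !dot_sub_l, !dot_sub_r, !dot_scale_l, !dot_scale_r, Hwx, Hu.
  field; lra.
Qed.

Definition joachimsthal (a1 a2 : R) (p q : pt) : R :=
  - dot (unit_dir p q) (Amul a1 a2 p).

Lemma joachimsthal_chord a1 a2 p q : on_ellipse a1 a2 p -> on_ellipse a1 a2 q ->
  dot (unit_dir p q) (Amul a1 a2 q) = joachimsthal a1 a2 p q.
Proof.
  unfold on_ellipse, joachimsthal, unit_dir; intros Hp Hq.
  rewrite !dot_scale_l.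
  enough (dot (vsub q p) (Amul a1 a2 q) = - dot (vsub q p) (Amul a1 a2 p)) as -> by ring.
  rewrite !dot_sub_l, (Amul_dot_sym a1 a2 p q),
    (dot_comm q (Amul a1 a2 q)), (dot_comm p (Amul a1 a2 p)), (dot_comm q (Amul a1 a2 p)).
  lra.
Qed.

Lemma joachimsthal_reflection a1 a2 p q r :
  on_ellipse a1 a2 p -> on_ellipse a1 a2 q -> reflection_law a1 a2 p q r ->
  joachimsthal a1 a2 q r = joachimsthal a1 a2 p q.
Proof.
  intros Hp Hq Hrefl.
  change (unit_dir q r = mirror (Amul a1 a2 q) (unit_dir p q)) in Hrefl.
  unfold joachimsthal at 1; rewrite Hrefl, mirror_dot_normal
    by exact (Amul_on_ellipse_neq0 _ _ _ Hq).
  rewrite joachimsthal_chord by assumption; ring.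
Qed.

Lemma cos_angle_reflection a1 a2 p q r :
  on_ellipse a1 a2 p -> on_ellipse a1 a2 q -> q <> p ->
  reflection_law a1 a2 p q r ->
  dot (vsub p q) (vsub r q) / (norm (vsub p q) * norm (vsub r q))
  = joachimsthal a1 a2 p q
      * (dot (unit_dir p q) p + norm (vsub q p) - dot (unit_dir q r) q) - 1.
Proof.
  intros Hp Hq Hqp Hrefl.
  change (unit_dir q r = mirror (Amul a1 a2 q) (unit_dir p q)) in Hrefl.
  pose proof (mirror_defect (Amul a1 a2 q) (unit_dir p q) q
    (Amul_on_ellipse_neq0 _ _ _ Hq) Hq (unit_dir_dot_self _ _ Hqp)) as Hdefect.
  rewrite <- Hrefl, joachimsthal_chord, dot_sub_l in Hdefect by assumption.
  pose proof (unit_dir_dot_vsub p q) as Hlength; rewrite dot_sub_r in Hlength.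
  rewrite cos_angle_unit_dir; nra.
Qed.

Lemma sum_telescope (f : nat -> R) m :
  sum_f_R0 (fun k => f k - f (S k)) m = f 0%nat - f (S m).
Proof. induction m as [|m IH]; simpl; [| rewrite IH]; ring. Qed.

Lemma sum_shift_periodic (f : nat -> R) m : f (S m) = f 0%nat ->
  sum_f_R0 (fun k => f (S k)) m = sum_f_R0 f m.
Proof.
  intro Hf; pose proof (minus_sum f (fun k => f (S k)) m).
  rewrite sum_telescope, Hf in *; lra.
Qed.

Lemma sum_affine_telescope (c : R) (f g : nat -> R) m :
  sum_f_R0 (fun k => c * (f k - f (S k) + g k) - 1) m
  = c * (f 0%nat - f (S m) + sum_f_R0 g m) - INR (S m).
Proof.
  induction m as [|m IH]; [simpl; ring |].
  rewrite tech5, IH, tech5, (S_INR (S m)); ring.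
Qed.

Section PeriodicBilliard.

Variables (a1 a2 : R) (n : nat) (p : nat -> pt).
Hypothesis billiard : periodic_billiard a1 a2 n p.

Let J := joachimsthal a1 a2 (p 0%nat) (p 1%nat).
Let u k := unit_dir (p k) (p (S k)).
Let side k := norm (vsub (p (S k)) (p k)).

Lemma n_succ_pred : n = S (n - 1).
Proof. destruct billiard; lia. Qed.

Lemma periodic_succ (f : pt -> pt -> R) :
  f (p n) (p (S n)) = f (p 0%nat) (p 1%nat).
Proof.
  destruct billiard as [_ [Hper _]].
  now rewrite <- (Hper 0%nat), <- (Hper 1%nat).
Qed.

Lemma billiard_reflection k : reflection_law a1 a2 (p k) (p (S k)) (p (S (S k))).
Proof.
  destruct billiard as [_ [_ [_ [_ Hrefl]]]].
  replace k with (S k - 1)%nat at 1 by lia; apply Hrefl; lia.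
Qed.

Lemma joachimsthal_const k : joachimsthal a1 a2 (p k) (p (S k)) = J.
Proof.
  destruct billiard as [_ [_ [Hell _]]].
  induction k as [|k IH]; [reflexivity |].
  rewrite <- IH; apply joachimsthal_reflection, billiard_reflection; auto.
Qed.

Lemma cos_angle_succ k :
  cos_angle p (S k) = J * (dot (u k) (p k) - dot (u (S k)) (p (S k)) + side k) - 1.
Proof.
  destruct billiard as [_ [_ [Hell [Hne _]]]].
  unfold cos_angle; replace (S k - 1)%nat with k by lia.
  rewrite (cos_angle_reflection a1 a2), joachimsthal_const;
    auto using billiard_reflection.
  unfold u, side; ring.
Qed.

Lemma perimeter_sum_sides : perimeter p n = sum_f_R0 side (n - 1).
Proof.
  apply (sum_shift_periodic side).
  rewrite <- n_succ_pred; exact (periodic_succ (fun x y => norm (vsub y x))).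
Qed.

End PeriodicBilliard.

Theorem theorem2p4 (a1 a2 : R) (n : nat) (p : nat -> pt) :
  0 < a1 -> 0 < a2 ->
  periodic_billiard a1 a2 n p ->
  let L := perimeter p n in
  let J := - dot (unit_dir (p 1%nat) (p 2%nat)) (Amul a1 a2 (p 1%nat)) in
  sum_f_R0 (fun k => cos_angle p (S k)) (n - 1) = J * L - INR n.
Proof.
  intros _ _ billiard L J.
  assert (HJ : J = joachimsthal a1 a2 (p 0%nat) (p 1%nat))
    by exact (joachimsthal_const a1 a2 n p billiard 1).
  rewrite (sum_eq _ _ _ (fun k _ => cos_angle_succ a1 a2 n p billiard k)).
  rewrite sum_affine_telescope, <- (n_succ_pred a1 a2 n p billiard).
  rewrite (periodic_succ a1 a2 n p billiard (fun x y => dot (unit_dir x y) x)).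
  unfold L; rewrite (perimeter_sum_sides a1 a2 n p billiard), HJ; ring.
Qed.
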